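(* Let $\mathcal{N}=(N,M_0)$ be a two-level PT-net system with transitions partitioned into low-level transitions $L$ and high-level transitions $H$. Then $\mathcal{N}$ has the property BNDC if and only if it has the property SBNDC.
   Context: A PT-net is $N=(P,T,F)$ with $P,T$ finite disjoint sets (places, transitions) and $F:(P\times T)\cup(T\times P)\to\mathbb{N}$. A marking is $M:P\to\mathbb{N}$; $t$ is enabled at $M$ (written $M[t\rangle$) iff $M(p)\ge F(p,t)$ for all $p$, and firing it yields $M'$ with $M'(p)=M(p)+F(t,p)-F(p,t)$ (written $M[t\rangle M'$); this extends to sequences. A PT-net system is $(N,M_0)$; reachable markings are those $M$ with $M_0[s\rangle M$ for some $s\in T^*$. For $T'\subseteq T$, $\mathcal{N}\setminus T'$ is obtained by deleting the transitions of $T'$ (same places, same initial marking). For PT-net systems $\mathcal{N}_1=(P_1,T_1,F_1,M_{1,0})$, $\mathcal{N}_2=(P_2,T_2,F_2,M_{2,0})$ with $P_1\cap P_2=\emptyset$, the composition $\mathcal{N}_1|\mathcal{N}_2$ has places $P_1\cup P_2$, transitions $T_1\cup T_2$ (a transition in $T_1\cap T_2$ is a single synchronized transition), flow $F(p,t)=F_i(p,t)$, $F(t,p)=F_i(t,p)$ for $p\in P_i$, $t\in T_i$ (and $0$ otherwise), and initial marking the union of $M_{1,0},M_{2,0}$. A two-level net system has its transition set partitioned into low-level $L$ and high-level $H$; a high-level net system has only high-level transitions. Transitions in $L$ are observable and those in $H$ unobservable. Two such systems are weakly bisimilar ($\approx$) if there is a relation $R$ between their reachable markings containing the pair of initial markings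 such that, for $(M_1,M_1')\in R$ (and symmetrically for $R^{-1}$): if $M_1[l\rangle M_2$ with $l$ observable then $M_1'$ can reach, by a sequence of unobservable transitions, then $l$, then unobservable transitions, some $M_2'$ with $(M_2,M_2')\in R$; if $M_1[h\rangle M_2$ with $h$ unobservable then $M_1'$ reaches by unobservable transitions some $M_2'$ with $(M_2,M_2')\in R$. BNDC: for every high-level net system $\mathcal{N}'$ (places disjoint from those of $\mathcal{N}$) whose transition set $H'$ does not intersect $L$, $\mathcal{N}\setminus H\approx(\mathcal{N}|\mathcal{N}')\setminus(H\setminus H')$. SBNDC: for every reachable marking $M_1$ of $\mathcal{N}$ and every $h\in H$, $M_1[h\rangle M_2$ implies that $(N\setminus H,M_1)$ and $(N\setminus H,M_2)$ are weakly bisimilar (all their transitions being low-level, hence observable). *)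

From mathcomp Require Import all_boot.
Set Implicit Arguments. Unset Strict Implicit. Unset Printing Implicit Defensive.

Section Nets.
Variable Tr : eqType.

(* A PT-net: finite set of transitions [trans] (a list of names, only
   membership matters), places = the finite type P, flow F(p,t) = pre t p,
   F(t,p) = post t p (values for t outside [trans] are irrelevant). *)
Record net (P : finType) := Net {
  trans : seq Tr;
  pre  : Tr -> P -> nat;
  post : Tr -> P -> nat }.

Definition marking (P : finType) := {ffun P -> nat}.

Variable P : finType.

Definition enabled (N : net P) (M : marking P) (t : Tr) : bool :=
  (t \in trans N) && [forall p, pre N t p <= M p].

Definition fire (N : net P) (M : marking P) (t : Tr) : marking P :=
  [ffun p => M p - pre N t p + post N t p].

Definition step (N : net P) (M : marking P) (t : Tr) (M' : marking P) : Prop :=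
  enabled N M t /\ M' = fire N M t.

Fixpoint fires (N : net P) (M : marking P) (s : seq Tr) (M' : marking P)
  : Prop :=
  match s with
  | [::] => M' = M
  | t :: s' => exists M1, step N M t M1 /\ fires N M1 s' M'
  end.

Definition reachable (N : net P) (M0 M : marking P) : Prop :=
  exists s, fires N M0 s M.

Definition tau_steps (obs : pred Tr) (N : net P) (M M' : marking P) : Prop :=
  exists s, all (predC obs) s /\ fires N M s M'.

Definition restrict (N : net P) (T' : seq Tr) : net P :=
  Net [seq t <- trans N | t \notin T'] (pre N) (post N).

End Nets.

Definition wsim (Tr : eqType) (P1 P2 : finType) (obs : pred Tr) (N1 : net Tr P1) (N2 : net Tr P2)
  (R : marking P1 -> marking P2 -> Prop) : Prop :=
  forall M1 M1', R M1 M1' -> forall t M2, step N1 M1 t M2 ->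
    (obs t -> exists A B M2', tau_steps obs N2 M1' A /\ step N2 A t B /\
                              tau_steps obs N2 B M2' /\ R M2 M2') /\
    (~~ obs t -> exists M2', tau_steps obs N2 M1' M2' /\ R M2 M2').

Section Compose.
Variable Tr : eqType.
Variables P1 P2 : finType.

(* composition N1 | N2; the place sets are made disjoint by the sum type;
   shared transition names are synchronised *)
Definition compose (N1 : net Tr P1) (N2 : net Tr P2) : net Tr (P1 + P2)%type :=
  Net (trans N1 ++ trans N2)
    (fun t p => match p with
                | inl p1 => if t \in trans N1 then pre N1 t p1 else 0
                | inr p2 => if t \in trans N2 then pre N2 t p2 else 0 end)
    (fun t p => match p with
                | inl p1 => if t \in trans N1 then post N1 t p1 else 0
                | inr p2 => if t \in trans N2 then post N2 t p2 else 0 end).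

Definition compose_marking (M1 : marking P1) (M2 : marking P2)
  : marking (P1 + P2)%type :=
  [ffun p => match p with inl p1 => M1 p1 | inr p2 => M2 p2 end].

Definition wbisim (obs : pred Tr) (N1 : net Tr P1) (m1 : marking P1)
  (N2 : net Tr P2) (m2 : marking P2) : Prop :=
  exists R : marking P1 -> marking P2 -> Prop,
    R m1 m2 /\
    (forall a b, R a b -> reachable N1 m1 a /\ reachable N2 m2 b) /\
    wsim obs N1 N2 R /\ wsim obs N2 N1 (fun b a => R a b).
End Compose.

Definition two_level (Tr : eqType) (P : finType) (N : net Tr P) (L H : seq Tr)
  : Prop :=
  (forall t, (t \in trans N) = (t \in L) || (t \in H)) /\
  (forall t, t \in L -> t \notin H).

(* BNDC: for every high-level net system (N', M0') (places disjoint, via the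
   sum type; transitions H' disjoint from L),
   N \ H  ~~  (N | N') \ (H \ H'). *)
Definition BNDC (Tr : eqType) (P : finType) (N : net Tr P) (M0 : marking P)
  (L H : seq Tr) : Prop :=
  forall (P' : finType) (N' : net Tr P') (M0' : marking P'),
    (forall t, t \in trans N' -> t \notin L) ->
    wbisim (mem L) (restrict N H) M0
      (restrict (compose N N') [seq t <- H | t \notin trans N'])
      (compose_marking M0 M0').

Definition SBNDC (Tr : eqType) (P : finType) (N : net Tr P) (M0 : marking P)
  (L H : seq Tr) : Prop :=
  forall M1, reachable N M0 M1 -> forall h M2, h \in H -> step N M1 h M2 ->
    wbisim (mem L) (restrict N H) M1 (restrict N H) M2.

(* Since all transitions of N \ H are observable, weak bisimilarity on it is
   strong bisimilarity, hence an equivalence that transfers single steps.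

   SBNDC -> BNDC: relate a marking M of N \ H to a marking c of the composite
   when the N-component of c is reachable and bisimilar to M.  High transitions
   of N are absorbed by SBNDC, those of the high net N' do not touch the
   N-component, and low transitions are matched step by step.

   BNDC -> SBNDC: for M0 [s> M1 [h> M2 with h high, let k be the number of high
   transitions in s and compose N with a one-place net in which every high
   transition consumes a token.  From k (resp. k+1) tokens the composite runs
   s (resp. s h) and stops with an empty counter at M1 (resp. M2).  Both runs
   have the same observable part, so BNDC matches them by the same run of N \ H,
   ending at one marking z bisimilar to both; with an empty counter the
   composite behaves as N \ H, so M1 and M2 are bisimilar through z. *)

From mathcomp Require Import all_boot.
Set Implicit Arguments. Unset Strict Implicit. Unset Printing Implicit Defensive.

Section Firing.
Variables (Tr : eqType) (P : finType) (N : net Tr P).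

Lemma fires_cat m s m' s' m'' :
  fires N m s m' -> fires N m' s' m'' -> fires N m (s ++ s') m''.
Proof.
elim: s m => [|t s IHs] m /=; first by move=> ->.
by case=> m1 [st fs] fs'; exists m1; split=> //; apply: IHs fs fs'.
Qed.

Lemma fires_fun m s m' m'' : fires N m s m' -> fires N m s m'' -> m' = m''.
Proof.
elim: s m => [|t s IHs] m /=; first by move=> -> ->.
by case=> m1 [[_ ->] fs1] [m2 [[_ ->] fs2]]; apply: IHs fs1 fs2.
Qed.

Lemma step_fires m t m' : step N m t m' -> fires N m [:: t] m'.
Proof. by exists m'. Qed.

Lemma fires1 m t m' : fires N m [:: t] m' -> step N m t m'.
Proof. by case=> m1 [st ->]. Qed.

Lemma reachable_fires m0 m s m' :
  reachable N m0 m -> fires N m s m' -> reachable N m0 m'.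
Proof. by case=> s0 fs0 fs; exists (s0 ++ s); apply: fires_cat fs0 fs. Qed.

Lemma step_restrict T m t m' :
  step (restrict N T) m t m' <-> t \notin T /\ step N m t m'.
Proof.
rewrite /step /enabled /= mem_filter -andbA.
by split=> [[/andP[-> en] ->]|[-> [en ->]]].
Qed.

Lemma tau_steps_observable (obs : pred Tr) m m' :
  all obs (trans N) -> tau_steps obs N m m' -> m' = m.
Proof.
move=> obsN [[|t s] [/= unobs fs]] //; case/andP: unobs => /negP[].
by case: fs => m1 [[/andP[tN _] _] _]; apply: (allP obsN).
Qed.

End Firing.

Definition strong_sim (Tr : eqType) (P1 P2 : finType) (N1 : net Tr P1)
  (N2 : net Tr P2) (R : marking P1 -> marking P2 -> Prop) : Prop :=
  forall a b t a', R a b -> step N1 a t a' -> exists2 b', step N2 b t b' & R a' b'.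

Definition bisimilar (Tr : eqType) (P1 P2 : finType) (obs : pred Tr)
  (N1 : net Tr P1) (N2 : net Tr P2) (m1 : marking P1) (m2 : marking P2) : Prop :=
  exists R, [/\ R m1 m2, wsim obs N1 N2 R & wsim obs N2 N1 (fun b a => R a b)].

Section Bisimulation.
Variables (Tr : eqType) (obs : pred Tr).

Lemma strong_sim_wsim (P1 P2 : finType) (N1 : net Tr P1) (N2 : net Tr P2) R :
  strong_sim N1 N2 R -> wsim obs N1 N2 R.
Proof.
move=> sim a b Rab t a' st; have [b' st' Rab'] := sim a b t a' Rab st.
split=> [_|unobs]; first by exists b, b', b'; do !split=> //; exists [::].
by exists b'; split=> //; exists [:: t]; rewrite /= unobs; split=> //; exists b'.
Qed.

Lemma strong_bisimilar (P1 P2 : finType) (N1 : net Tr P1) (N2 : net Tr P2) R m1 m2 :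
  strong_sim N1 N2 R -> strong_sim N2 N1 (fun b a => R a b) -> R m1 m2 ->
  bisimilar obs N1 N2 m1 m2.
Proof. by move=> sim12 sim21 Rm; exists R; split=> //; apply: strong_sim_wsim. Qed.

Lemma bisimilar_refl (P : finType) (N : net Tr P) m : bisimilar obs N N m m.
Proof. by apply: (strong_bisimilar (R := eq)) => // a b t a' -> st; exists a'. Qed.

Lemma bisimilar_sym (P1 P2 : finType) (N1 : net Tr P1) (N2 : net Tr P2) m1 m2 :
  bisimilar obs N1 N2 m1 m2 -> bisimilar obs N2 N1 m2 m1.
Proof. by case=> R [Rm W12 W21]; exists (fun b a => R a b). Qed.

Lemma wsim_fires (P1 P2 : finType) (N1 : net Tr P1) (N2 : net Tr P2) R s c c' a :
  all obs (trans N1) -> wsim obs N2 N1 R -> fires N2 c s c' -> R c a ->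
  exists2 a', fires N1 a [seq t <- s | obs t] a' & R c' a'.
Proof.
move=> obsN1 W; elim: s c a => [|t s IHs] c a /=; first by move=> -> Rca; exists a.
case=> c1 [st fs] Rca; have [Wobs Wunobs] := W c a Rca t c1 st.
case: (boolP (obs t)) => [obst|unobs].
  have [A [B [a1 [/tau_steps_observable-> // [st' [/tau_steps_observable-> // Ra1]]]]]]
    := Wobs obst.
  by have [a' fs' Ra'] := IHs c1 B fs Ra1; exists a' => //; exists B.
have [a1 [/tau_steps_observable-> // Ra1]] := Wunobs unobs.
by apply: IHs fs Ra1.
Qed.

Lemma bisimilar_fires (P1 P2 : finType) (N1 : net Tr P1) (N2 : net Tr P2) a c s c' :
  all obs (trans N1) -> bisimilar obs N1 N2 a c -> fires N2 c s c' ->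
  exists2 a', fires N1 a [seq t <- s | obs t] a' & bisimilar obs N1 N2 a' c'.
Proof.
move=> obsN1 [R [Rac W12 W21]] fs.
by have [a' fs' Ra'] := wsim_fires obsN1 W21 fs Rac; exists a' => //; exists R.
Qed.

(* A weak step of N2 is a run with a single observable transition, which the
   unobservable-free N3 matches by a single step. *)
Lemma wsim_comp (P1 P2 P3 : finType) (N1 : net Tr P1) (N2 : net Tr P2)
    (N3 : net Tr P3) R S :
  all obs (trans N1) -> all obs (trans N3) ->
  wsim obs N1 N2 R -> wsim obs N2 N3 S ->
  strong_sim N1 N3 (fun a c => exists2 b, R a b & S b c).
Proof.
move=> obsN1 obsN3 WR WS a c t a' [b Rab Sbc] st.
have obst : obs t by case: st => /andP[tN _] _; apply: (allP obsN1).
have [A [B [b' [[s1 [unobs1 fs1]] [stA [[s2 [unobs2 fs2]] Rab']]]]]] :=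
  (WR a b Rab t a' st).1 obst.
have fsb : fires N2 b (s1 ++ t :: s2) b'.
  by apply: fires_cat fs1 _; exists B.
have unobs_nil s : all (predC obs) s -> [seq u <- s | obs u] = [::].
  by rewrite all_predC has_filter negbK => /eqP.
have [c' fsc Sbc'] := wsim_fires obsN3 WS fsb Sbc.
move: fsc; rewrite filter_cat /= obst !unobs_nil // => /fires1 stc.
by exists c' => //; exists b'.
Qed.

Lemma bisimilar_trans (P1 P2 P3 : finType) (N1 : net Tr P1) (N2 : net Tr P2)
    (N3 : net Tr P3) x y z :
  all obs (trans N1) -> all obs (trans N3) ->
  bisimilar obs N1 N2 x y -> bisimilar obs N2 N3 y z -> bisimilar obs N1 N3 x z.
Proof.
move=> obsN1 obsN3 [R [Rxy WR WR']] [S [Syz WS WS']].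
apply: (strong_bisimilar (R := fun a c => exists2 b, R a b & S b c)).
- exact: wsim_comp obsN1 obsN3 WR WS.
- move=> c a t c' [b Rab Sbc] st.
  have [a' st' [b' Sbc' Rab']] :=
    wsim_comp obsN3 obsN1 WS' WR' (ex_intro2 _ _ b Sbc Rab) st.
  by exists a' => //; exists b'.
- by exists y.
Qed.

Lemma bisimilar_step (P1 P2 : finType) (N1 : net Tr P1) (N2 : net Tr P2) a b t a' :
  all obs (trans N1) -> all obs (trans N2) -> bisimilar obs N1 N2 a b ->
  step N1 a t a' -> exists2 b', step N2 b t b' & bisimilar obs N1 N2 a' b'.
Proof.
move=> obsN1 obsN2 [R [Rab W12 W21]] st.
have obst : obs t by case: st => /andP[tN _] _; apply: (allP obsN1).
have [A [B [b' [/tau_steps_observable-> // [st' [/tau_steps_observable-> // Rab']]]]]]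
  := (W12 a b Rab t a' st).1 obst.
by exists B => //; exists R.
Qed.

Lemma wsim_invariant (P1 P2 : finType) (N1 : net Tr P1) (N2 : net Tr P2) R
    (I : marking P1 -> marking P2 -> Prop) :
  (forall a b s a', I a b -> fires N1 a s a' -> I a' b) ->
  (forall a b s b', I a b -> fires N2 b s b' -> I a b') ->
  wsim obs N1 N2 R -> wsim obs N1 N2 (fun a b => R a b /\ I a b).
Proof.
move=> I1 I2 W a b [Rab Iab] t a' st; have Ia'b := I1 _ _ _ _ Iab (step_fires st).
have [Wobs Wunobs] := W a b Rab t a' st; split=> [/Wobs|/Wunobs].
  case=> A [B [b' [[s1 [u1 fs1]] [stA [[s2 [u2 fs2]] Rab']]]]].
  exists A, B, b'; do ![split=> //]; [by exists s1|by exists s2|].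
  by apply: I2 Ia'b _; apply: fires_cat fs1 (fires_cat (step_fires stA) fs2).
case=> b' [[s [u fs]] Rab']; exists b'; do ![split=> //]; first by exists s.
exact: I2 Ia'b fs.
Qed.

Lemma wbisim_bisimilar (P1 P2 : finType) (N1 : net Tr P1) (N2 : net Tr P2) m1 m2 :
  wbisim obs N1 m1 N2 m2 <-> bisimilar obs N1 N2 m1 m2.
Proof.
split=> [[R [Rm [_ [W12 W21]]]]|[R [Rm W12 W21]]]; first by exists R.
pose I a b := reachable N1 m1 a /\ reachable N2 m2 b.
have I1 a b s a' : I a b -> fires N1 a s a' -> I a' b.
  by case=> ra rb fs; split=> //; apply: reachable_fires ra fs.
have I2 a b s b' : I a b -> fires N2 b s b' -> I a b'.
  by case=> ra rb fs; split=> //; apply: reachable_fires rb fs.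
exists (fun a b => R a b /\ I a b); split; first by split=> //; split; exists [::].
split; first by move=> a b [].
split; first exact: wsim_invariant.
apply: (wsim_invariant (I := fun b a => I a b)) => // [b a s b'|b a s a'].
  exact: I2.
exact: I1.
Qed.

End Bisimulation.

Definition local_step (Tr : eqType) (P : finType) (N : net Tr P)
  (m : marking P) (t : Tr) (m' : marking P) : Prop :=
  if t \in trans N then step N m t m' else m' = m.

Section Composition.
Variables (Tr : eqType) (P1 P2 : finType).

Definition lproj (c : marking (P1 + P2)%type) : marking P1 := [ffun p => c (inl p)].
Definition rproj (c : marking (P1 + P2)%type) : marking P2 := [ffun p => c (inr p)].

Lemma lproj_compose m1 m2 : lproj (compose_marking m1 m2) = m1.
Proof. by apply/ffunP => p; rewrite !ffunE. Qed.

Lemma rproj_compose m1 m2 : rproj (compose_marking m1 m2) = m2.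
Proof. by apply/ffunP => p; rewrite !ffunE. Qed.

Lemma compose_marking_proj c : compose_marking (lproj c) (rproj c) = c.
Proof. by apply/ffunP => -[p|p]; rewrite !ffunE. Qed.

Lemma step_compose (N1 : net Tr P1) (N2 : net Tr P2) c t c' :
  step (compose N1 N2) c t c' <->
  [/\ t \in trans N1 ++ trans N2, local_step N1 (lproj c) t (lproj c')
    & local_step N2 (rproj c) t (rproj c')].
Proof.
rewrite /step /local_step /enabled /=; split.
  case=> /andP[tN /forallP en] ->; split=> //.
    case: ifP => t1; last by apply/ffunP => p; rewrite !ffunE /= t1 subn0 addn0.
    split; last by apply/ffunP => p; rewrite !ffunE /= t1.
    by rewrite /enabled t1; apply/forallP => p; move: (en (inl p)); rewrite /= t1 ffunE.
  case: ifP => t2; last by apply/ffunP => p; rewrite !ffunE /= t2 subn0 addn0.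
  split; last by apply/ffunP => p; rewrite !ffunE /= t2.
  by rewrite /enabled t2; apply/forallP => p; move: (en (inr p)); rewrite /= t2 ffunE.
case=> tN l1 l2; split.
  rewrite tN; apply/forallP => -[p|p] /=.
    by case: ifP l1 => // _ [/andP[_ /forallP/(_ p)]]; rewrite ffunE.
  by case: ifP l2 => // _ [/andP[_ /forallP/(_ p)]]; rewrite ffunE.
apply/ffunP => -[p|p]; rewrite ffunE /=.
  case: ifP l1 => t1 => [[_]|] /ffunP/(_ p); rewrite !ffunE //.
  by rewrite subn0 addn0.
case: ifP l2 => t2 => [[_]|] /ffunP/(_ p); rewrite !ffunE //.
by rewrite subn0 addn0.
Qed.

End Composition.

Definition counter_net (Tr : eqType) (H : seq Tr) : net Tr unit :=
  Net H (fun _ _ => 1) (fun _ _ => 0).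

Definition counter_marking (P : finType) (m : marking P) (k : nat)
  : marking (P + unit)%type :=
  compose_marking m [ffun _ => k].

Definition counter_composite (Tr : eqType) (P : finType) (N : net Tr P)
  (H : seq Tr) : net Tr (P + unit)%type :=
  restrict (compose N (counter_net H)) [seq t <- H | t \notin trans (counter_net H)].

Section Counter.
Variables (Tr : eqType) (P : finType) (N : net Tr P) (H : seq Tr).
Hypothesis HN : {subset H <= trans N}.

Lemma step_counter y k t B :
  step (counter_composite N H) (counter_marking y k) t B <->
  exists y', [/\ step N y t y', (t \in H) <= k
                & B = counter_marking y' (k - (t \in H))].
Proof.
split.
  case/step_restrict=> _ /step_compose[tN12].
  rewrite /local_step /= lproj_compose rproj_compose => stN stH.
  have tN : t \in trans N by move: tN12; rewrite mem_cat => /orP[//|/HN].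
  rewrite tN in stN; exists (lproj B); split=> //.
    by case: (t \in H) stH => // -[/andP[_ /forallP/(_ tt)]]; rewrite ffunE.
  rewrite -[B in LHS]compose_marking_proj; congr compose_marking.
  case: (t \in H) stH => [[_ ->]|->].
    by apply/ffunP => -[]; rewrite !ffunE addn0.
  by apply/ffunP => -[]; rewrite !ffunE subn0.
case=> y' [stN tHk ->]; apply/step_restrict; split; first by rewrite mem_filter andNb.
have tN : t \in trans N by case: stN => /andP[].
apply/step_compose; rewrite /local_step /= tN mem_cat tN.
split; rewrite ?lproj_compose ?rproj_compose //.
case tH: (t \in H) in tHk *; last by apply/ffunP => -[]; rewrite !ffunE subn0.
split; first by rewrite /enabled tH; apply/forallP => -[]; rewrite ffunE.
by apply/ffunP => -[]; rewrite !ffunE addn0.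
Qed.

Lemma fires_counter y s y' k :
  fires N y s y' -> count (mem H) s <= k ->
  fires (counter_composite N H) (counter_marking y k) s
    (counter_marking y' (k - count (mem H) s)).
Proof.
elim: s y k => [|t s IHs] y k /=; first by move=> ->; rewrite subn0.
case=> y1 [stN fs] le_k; exists (counter_marking y1 (k - (t \in H))); split.
  by apply/step_counter; exists y1; split=> //; apply: leq_trans le_k; apply: leq_addr.
by rewrite subnDA; apply: IHs fs _; rewrite leq_subRL // (leq_trans _ le_k) ?leq_addr.
Qed.

End Counter.

Section TwoLevel.
Variables (Tr : eqType) (P : finType) (N : net Tr P) (L H : seq Tr) (M0 : marking P).
Hypothesis two_levelN : two_level N L H.

Let NH := restrict N H.

Lemma restrict_observable : all (mem L) (trans NH).
Proof.
case: two_levelN => trN _; apply/allP => t.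
by rewrite /= mem_filter trN => /andP[/negbTE->]; rewrite orbF.
Qed.

Lemma high_unobservable t : t \in H -> t \notin L.
Proof. by case: two_levelN => _ disjLH tH; apply/negP => /disjLH; rewrite tH. Qed.

Lemma unobservable_high t : t \in trans N -> t \notin L -> t \in H.
Proof. by case: two_levelN => trN _; rewrite trN => /orP[->|]. Qed.

Definition lproj_related (P' : finType) (M : marking P)
  (c : marking (P + P')%type) : Prop :=
  bisimilar (mem L) NH NH (lproj c) M /\ reachable N M0 (lproj c).

Section Composite.
Variables (P' : finType) (N' : net Tr P').
Hypothesis N'_high : forall t, t \in trans N' -> t \notin L.

Let C := restrict (compose N N') [seq t <- H | t \notin trans N'].

Lemma wsim_restrict_composite : wsim (mem L) NH C (@lproj_related P').
Proof.
move=> M c [cM reach_c] t M2 st.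
have tL : t \in L by case: st => /andP[tNH _] _; apply: (allP restrict_observable).
split=> [_|]; last by rewrite /= tL.
have [x2 /step_restrict[tnH stN] x2M2] :=
  bisimilar_step restrict_observable restrict_observable (bisimilar_sym cM) st.
have tN : t \in trans N by case: stN => /andP[].
have tnN' : t \notin trans N' by apply: contraL tL; apply: N'_high.
pose c' := compose_marking x2 (rproj c).
exists c, c', c'; split; first by exists [::].
split.
  apply/step_restrict; split; first by rewrite mem_filter (negbTE tnH) andbF.
  apply/step_compose; rewrite /local_step lproj_compose rproj_compose.
  by rewrite mem_cat tN (negbTE tnN').
split; first by exists [::].
rewrite /lproj_related lproj_compose; split; first exact: bisimilar_sym.
exact: reachable_fires reach_c (step_fires stN).
Qed.

Lemma wsim_composite_restrict :
  SBNDC N M0 L H -> wsim (mem L) C NH (fun c M => lproj_related M c).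
Proof.
move=> sbndc c M [cM reach_c] t c' /step_restrict[_ /step_compose[tNN' lN _]].
rewrite /local_step in lN; case tN: (t \in trans N) in lN; last first.
  have tnL : t \notin L.
    by apply: N'_high; move: tNN'; rewrite mem_cat tN.
  split=> [|_]; first by rewrite /= (negbTE tnL).
  by exists M; split; [exists [::] | rewrite /lproj_related lN].
have reach_c' := reachable_fires reach_c (step_fires lN).
case: (boolP (t \in L)) => tL.
  have stNH : step NH (lproj c) t (lproj c').
    by apply/step_restrict; split=> //; apply: contraL tL; apply: high_unobservable.
  have [M2 stM c'M2] := bisimilar_step restrict_observable restrict_observable cM stNH.
  split=> [_|]; last by rewrite /= tL.
  by exists M, M2, M2; do !split=> //; exists [::].
have /wbisim_bisimilar cc' := sbndc _ reach_c _ _ (unobservable_high tN tL) lN.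
split=> [|_]; first by rewrite /= (negbTE tL).
exists M; split; first by exists [::].
split=> //; apply: bisimilar_trans (bisimilar_sym cc') cM;
  exact: restrict_observable.
Qed.

End Composite.

Lemma sbndc_bndc : SBNDC N M0 L H -> BNDC N M0 L H.
Proof.
move=> sbndc P' N' M0' N'_high; apply/wbisim_bisimilar.
exists (@lproj_related P').
split.
- by rewrite /lproj_related lproj_compose; split; [exact: bisimilar_refl|exists [::]].
- exact: wsim_restrict_composite.
- exact: wsim_composite_restrict.
Qed.

Lemma high_in_trans : {subset H <= trans N}.
Proof. by case: two_levelN => trN _ t tH; rewrite trN tH orbT. Qed.

Lemma step_counter0 y t B :
  step (counter_composite N H) (counter_marking y 0) t B <->
  exists2 y', step NH y t y' & B = counter_marking y' 0.
Proof.
split.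
  case/(step_counter high_in_trans) => y' [stN].
  by rewrite leqn0 eqb0 => tnH ->; exists y' => //; apply/step_restrict.
case=> y' /step_restrict[tnH stN] ->; apply/(step_counter high_in_trans).
by exists y'; rewrite (negbTE tnH).
Qed.

Lemma counter0_bisimilar y :
  bisimilar (mem L) (counter_composite N H) NH (counter_marking y 0) y.
Proof.
apply: (strong_bisimilar _ (R := fun B y => B = counter_marking y 0)) => //.
  by move=> _ y1 t B -> /step_counter0[y' st ->]; exists y'.
move=> y1 _ t y' -> st; exists (counter_marking y' 0) => //.
by apply/step_counter0; exists y'.
Qed.

Lemma bndc_sbndc : BNDC N M0 L H -> SBNDC N M0 L H.
Proof.
move=> bndc M1 [s fs] h M2 hH st; apply/wbisim_bisimilar.
have counter_high t : t \in trans (counter_net H) -> t \notin L := @high_unobservable t.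
have init k : bisimilar (mem L) NH (counter_composite N H) M0 (counter_marking M0 k).
  exact/wbisim_bisimilar/bndc.
set k := count (mem H) s.
have run1 :
    fires (counter_composite N H) (counter_marking M0 k) s (counter_marking M1 0).
  by have := fires_counter high_in_trans fs (leqnn k); rewrite subnn.
have run2 : fires (counter_composite N H) (counter_marking M0 k.+1) (s ++ [:: h])
    (counter_marking M2 0).
  have := fires_counter high_in_trans (fires_cat fs (step_fires st)).
  by rewrite count_cat /= hH addn0 addn1 => /(_ k.+1 (leqnn _)); rewrite subnn.
have [z1 fz1 z1M1] := bisimilar_fires restrict_observable (init k) run1.
have [z2 fz2 z2M2] := bisimilar_fires restrict_observable (init k.+1) run2.
move: fz2; rewrite filter_cat /= (negbTE (high_unobservable hH)) cats0.
move=> /(fires_fun fz1) z12; rewrite -z12 in z2M2.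
have obsNH := restrict_observable.
have z1_M1 := bisimilar_trans obsNH obsNH z1M1 (counter0_bisimilar M1).
have z1_M2 := bisimilar_trans obsNH obsNH z2M2 (counter0_bisimilar M2).
exact: (bisimilar_trans obsNH obsNH (bisimilar_sym z1_M1) z1_M2).
Qed.

End TwoLevel.

Theorem theorem1 (Tr : eqType) (P : finType) (N : net Tr P) (M0 : marking P)
  (L H : seq Tr) :
  two_level N L H -> (BNDC N M0 L H <-> SBNDC N M0 L H).
Proof. by move=> two_levelN; split; [apply: bndc_sbndc | apply: sbndc_bndc]. Qed.
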